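(* For every $n\ge2$ and every $n\times n$ Hermitian matrix $A$, $Y_{n,n-1}(A)\succ X_{n-1}(A)$; that is, the concatenation of $n-1$ copies of $\lambda(A)$ majorizes the vector of all eigenvalues of all $(n-1)\times(n-1)$ principal submatrices of $A$.
   Context: $\lambda(A)$ denotes the vector of eigenvalues of $A$ with multiplicity. For $1\le m\le n$, $X_m(A)$ is the vector listing the eigenvalues, with multiplicity, of all $\binom nm$ principal $m\times m$ submatrices of $A$, and $Y_{n,m}(A)$ is the concatenation of $\binom{n-1}{m-1}$ copies of $\lambda(A)$. For $x,y\in\mathbb R^N$, $x\succ y$ means $\sum_{i=1}^k x^{\downarrow}_i\ge\sum_{i=1}^k y^{\downarrow}_i$ for $k=1,\dots,N$ with equality at $k=N$, where $x^{\downarrow}$ is the non-increasing rearrangement. *)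

From HB Require Import structures.
From mathcomp Require Import all_boot all_order all_algebra.
From mathcomp Require Import complex.
Set Implicit Arguments. Unset Strict Implicit. Unset Printing Implicit Defensive.
Import Order.TTheory GRing.Theory Num.Theory.
Local Open Scope ring_scope.
Local Open Scope complex_scope.

Definition is_hermitian (R : rcfType) (n : nat) (A : 'M[R[i]]_n) : Prop :=
  A^T = map_mx (@conjc R) A.

(* [s] lists the eigenvalues of A with (algebraic) multiplicity, i.e. the
   roots of the characteristic polynomial counted with multiplicity;
   the eigenvalues are given as real numbers (embedded by x%:C). *)
Definition eigenvalues_of (R : rcfType) (n : nat) (A : 'M[R[i]]_n)
    (s : seq R) : Prop :=
  char_poly A = \prod_(x <- s) ('X - (x%:C)%:P).

Definition del_sub (C : Type) (n : nat) (A : 'M[C]_n) (i : 'I_n) : 'M[C]_n.-1 :=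
  row' i (col' i A).

Definition desc (R : realDomainType) (s : seq R) : seq R := sort (>=%R) s.

Definition majorizes (R : realDomainType) (x y : seq R) : Prop :=
  size x = size y /\
  (forall k, (k <= size x)%N ->
     \sum_(i < k) (desc y)`_i <= \sum_(i < k) (desc x)`_i) /\
  \sum_(i < size x) (desc x)`_i = \sum_(i < size y) (desc y)`_i.

From mathcomp Require Import all_boot all_order all_algebra.
From mathcomp Require Import complex spectral sesquilinear.
Import Order.TTheory GRing.Theory Num.Theory.
Set Implicit Arguments. Unset Strict Implicit. Unset Printing Implicit Defensive.
Local Open Scope ring_scope.

(* Diagonalize [A = U^* D U] and each deleted submatrix [A_i = V_i^* D_i V_i].  *)
(* Writing [A_i = S_i A S_i^T] with [S_i] the row-deletion matrix, every       *)
(* eigenvalue of [A_i] is a convex combination of those of [A], with weights   *)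
(* [|M_i(j,m)|^2] taken from the row-orthonormal matrix [M_i = V_i S_i U^*],   *)
(* and since [sum_i M_i^* M_i = (n-1) I] each eigenvalue of [A] receives total *)
(* weight [n-1].  Such an averaging produces a majorized vector: it cannot     *)
(* increase [sum_v (v - t)_+] for any [t], and these hinge sums determine the  *)
(* partial sums of the non-increasing rearrangement.                           *)

Section Majorization.
Variable R : realDomainType.

Definition hinge (t x : R) : R := Order.max (x - t) 0.

Lemma hinge_ge0 t x : 0 <= hinge t x.
Proof. by rewrite le_max lexx orbT. Qed.

Lemma hinge_geB t x : x - t <= hinge t x.
Proof. by rewrite le_max lexx. Qed.

Lemma hinge_eq0 t x : x <= t -> hinge t x = 0.
Proof. by move=> xt; apply/eqP; rewrite eq_le hinge_ge0 ge_max lexx subr_le0 xt. Qed.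

Lemma hinge_eqB t x : t <= x -> hinge t x = x - t.
Proof. by move=> tx; apply/eqP; rewrite eq_le hinge_geB ge_max lexx subr_ge0 tx. Qed.

Lemma hinge_convex (N : nat) (w x : 'I_N -> R) t :
  (forall m, 0 <= w m) -> \sum_m w m = 1 ->
  hinge t (\sum_m w m * x m) <= \sum_m w m * hinge t (x m).
Proof.
move=> w_ge0 w_sum1; rewrite ge_max; apply/andP; split.
  rewrite -[t in _ - t]mul1r -w_sum1 mulr_suml -sumrB; apply: ler_sum => m _.
  by rewrite -mulrBr ler_wpM2l ?hinge_geB.
by rewrite sumr_ge0 // => m _; rewrite mulr_ge0 ?hinge_ge0.
Qed.

Lemma sum_desc (G : R -> R) (s : seq R) :
  \sum_(i < size s) G (desc s)`_i = \sum_(v <- s) G v.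
Proof.
rewrite -(size_sort >=%R) -/(desc s) -(big_mkord xpredT (fun i => G (desc s)`_i)).
by rewrite -(big_nth 0 xpredT G); apply: perm_big; rewrite perm_sort.
Qed.

Lemma sum_prefix_le_hinge (s : seq R) k t : (k <= size s)%N ->
  \sum_(i < k) s`_i <= k%:R * t + \sum_(i < size s) hinge t s`_i.
Proof.
move=> ks; rewrite (bigID (fun i : 'I_(size s) => (i < k)%N)) /= addrA.
rewrite -(big_ord_widen _ (fun i => hinge t s`_i) ks).
apply: (@le_trans _ _ (k%:R * t + \sum_(i < k) hinge t s`_i)); last first.
  by rewrite lerDl sumr_ge0 // => i _; apply: hinge_ge0.
have -> : k%:R * t = \sum_(i < k) t by rewrite sumr_const card_ord mulr_natl.
rewrite -big_split /=.
by apply: ler_sum => i _; rewrite -lerBlDl hinge_geB.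
Qed.

Lemma sum_prefix_sorted (s : seq R) k : sorted >=%R s -> (0 < k <= size s)%N ->
  \sum_(i < k) s`_i = k%:R * s`_k.-1 + \sum_(i < size s) hinge s`_k.-1 s`_i.
Proof.
move=> s_sorted /andP[k_gt0 ks]; set t := s`_k.-1.
have s_noninc i j : (i <= j)%N -> (j < size s)%N -> s`_j <= s`_i.
  move=> ij js; apply: (sorted_leq_nth ge_trans le_refl) => //.
  by rewrite inE (leq_ltn_trans ij js).
rewrite (bigID (fun i : 'I_(size s) => (i < k)%N)) /=.
rewrite [X in _ + (_ + X)]big1 ?addr0 => [|i]; last first.
  by rewrite -leqNgt => ki; rewrite hinge_eq0 // s_noninc // (leq_trans _ ki) ?leq_pred.
rewrite -(big_ord_widen _ (fun i => hinge t s`_i) ks).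
have -> : k%:R * t = \sum_(i < k) t by rewrite sumr_const card_ord mulr_natl.
rewrite -big_split /=.
apply: eq_bigr => i _; rewrite hinge_eqB; first by rewrite addrC subrK.
by apply: s_noninc; [rewrite -ltnS prednK | rewrite prednK].
Qed.

Lemma hinge_majorizes (x y : seq R) :
  size x = size y -> \sum_(v <- x) v = \sum_(v <- y) v ->
  (forall t, \sum_(v <- y) hinge t v <= \sum_(v <- x) hinge t v) ->
  majorizes x y.
Proof.
move=> size_xy sum_xy hinge_xy; split=> //; split; last first.
  by rewrite (sum_desc id) (sum_desc id).
case=> [|k] kx; first by rewrite !big_ord0.
have desc_sorted : sorted >=%R (desc x) by apply: sort_sorted => a b; apply: le_total.
rewrite (sum_prefix_sorted desc_sorted) ?size_sort //=; set t := (desc x)`_k.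
apply: le_trans (sum_prefix_le_hinge t _) _; first by rewrite size_sort -size_xy.
by rewrite lerD2l !size_sort !sum_desc.
Qed.

Lemma sum_flatten_nseq (G : R -> R) c (s : seq R) :
  \sum_(v <- flatten (nseq c s)) G v = (\sum_(v <- s) G v) *+ c.
Proof. by elim: c => [|c IHc]; rewrite ?big_nil //= big_cat IHc mulrS. Qed.

(* Hardy-Littlewood-Polya, for a rectangular doubly stochastic averaging [w]. *)
Lemma averaging_majorizes (N K c : nat) (I : finType) (lam : seq R)
    (x : 'I_N -> R) (mu : I -> seq R) (y : I -> 'I_K -> R)
    (w : I -> 'I_K -> 'I_N -> R) :
  (#|I| * K = c * N)%N ->
  perm_eq lam [seq x m | m <- enum 'I_N] ->
  (forall i, perm_eq (mu i) [seq y i j | j <- enum 'I_K]) ->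
  (forall i j m, 0 <= w i j m) ->
  (forall i j, \sum_m w i j m = 1) ->
  (forall m, \sum_i \sum_j w i j m = c%:R) ->
  (forall i j, y i j = \sum_m w i j m * x m) ->
  majorizes (flatten (nseq c lam)) (flatten [seq mu i | i <- enum I]).
Proof.
move=> card_IK lam_x mu_y w_ge0 w_row w_col yE.
have sum_lam (G : R -> R) :
    \sum_(v <- flatten (nseq c lam)) G v = (\sum_m G (x m)) *+ c.
  by rewrite sum_flatten_nseq (perm_big _ lam_x) big_map big_enum.
have sum_mu (G : R -> R) : \sum_(v <- flatten [seq mu i | i <- enum I]) G v
    = \sum_i \sum_j G (y i j).
  rewrite big_flatten big_map big_enum; apply: eq_bigr => i _.
  by rewrite (perm_big _ (mu_y i)) big_map big_enum.
have sum_weighted (G : R -> R) :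
    \sum_i \sum_j \sum_m w i j m * G (x m) = (\sum_m G (x m)) *+ c.
  under eq_bigr do rewrite exchange_big /=.
  rewrite exchange_big -mulr_natl mulr_sumr; apply: eq_bigr => m _.
  by rewrite -(w_col m) mulr_suml; apply: eq_bigr => i _; rewrite mulr_suml.
apply: hinge_majorizes => [|| t].
- rewrite !size_flatten /shape map_nseq sumn_nseq (perm_size lam_x) size_map.
  rewrite size_enum_ord -map_comp sumnE big_map big_enum /=.
  under eq_bigr do rewrite (perm_size (mu_y _)) size_map size_enum_ord.
  by rewrite sum_nat_const card_IK mulnC.
- rewrite (sum_lam id) (sum_mu id) -(sum_weighted id).
  by apply: eq_bigr => i _; apply: eq_bigr => j _; rewrite yE.
- rewrite (sum_lam (hinge t)) (sum_mu (hinge t)) -(sum_weighted (hinge t)).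
  apply: ler_sum => i _; apply: ler_sum => j _; rewrite yE.
  exact: hinge_convex.
Qed.

End Majorization.

Lemma char_poly_similar (F : comUnitRingType) n (P D : 'M[F]_n) :
  P \in unitmx -> char_poly (invmx P *m D *m P) = char_poly D.
Proof.
move=> P_unit; rewrite /char_poly /char_poly_mx.
set Pi := map_mx polyC (invmx P); set Q := map_mx polyC P.
have PiQ : Pi *m Q = 1%:M by rewrite -map_mxM mulVmx // map_mx1.
have -> : 'X%:M - map_mx polyC (invmx P *m D *m P)
    = Pi *m ('X%:M - map_mx polyC D) *m Q.
  rewrite mulmxBr mulmxBl !map_mxM -/Pi -/Q scalar_mxC.
  by rewrite -[_ *m Pi *m Q]mulmxA PiQ mulmx1.
by rewrite !det_mulmx mulrAC -det_mulmx PiQ det1 mul1r.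
Qed.

Lemma perm_eq_similar_diag (F : fieldType) n (P : 'M[F]_n) (d : 'rV[F]_n)
    (s : seq F) :
  P \in unitmx ->
  char_poly (invmx P *m diag_mx d *m P) = \prod_(x <- s) ('X - x%:P) ->
  perm_eq s [seq d 0 m | m <- enum 'I_n].
Proof.
move=> P_unit; rewrite char_poly_similar // char_poly_trig ?diag_mx_is_trig // => ds.
apply: prod_XsubC_eq; rewrite -ds big_map big_enum /=.
by apply: eq_bigr => m _; rewrite mxE eqxx.
Qed.

Section DeletionMatrix.
Variables (R : pzRingType) (n : nat).

Definition delmx (i : 'I_n) : 'M[R]_(n.-1, n) := row' i 1%:M.

Lemma del_subE (A : 'M[R]_n) i : del_sub A i = delmx i *m A *m (delmx i)^T.
Proof.
rewrite /del_sub /delmx tr_row' trmx1 !row'Esub !col'Esub.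
by rewrite !mul_rowsub_mx mul1mx mulmx_colsub mulmx1.
Qed.

Lemma delmx_mulT i : delmx i *m (delmx i)^T = 1%:M.
Proof.
rewrite -[X in X *m _]mulmx1 -del_subE; apply/matrixP => a b.
by rewrite !mxE (inj_eq lift_inj).
Qed.

Lemma trdelmx_mul i : (delmx i)^T *m delmx i = 1%:M - delta_mx i i.
Proof.
apply/matrixP => c e; rewrite !mxE; under eq_bigr do rewrite !mxE.
case: (unliftP i c) => [j ->|->]; last first.
  rewrite eqxx /= eq_sym subrr big1 // => a _.
  by rewrite lift_eqF mul0r.
rewrite lift_eqF subr0 (bigD1 j) //= eqxx mul1r big1 ?addr0 //.
by move=> a /negbTE aj; rewrite (inj_eq lift_inj) aj mul0r.
Qed.

Lemma sum_trdelmx_mul : \sum_i (delmx i)^T *m delmx i = (n.-1)%:R%:M.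
Proof.
under eq_bigr do rewrite trdelmx_mul.
rewrite sumrB -mx1_sum_delta sumr_const card_ord.
case: n => [|k]; first by apply/matrixP => -[].
by rewrite mulrSr addrK raddfMn.
Qed.

End DeletionMatrix.

Local Open Scope sesquilinear_scope.

Section Mixing.
Variable C : numClosedFieldType.

Lemma adj_delmx n (i : 'I_n) : (delmx C i)^t* = (delmx C i)^T.
Proof. by rewrite -map_trmx /delmx map_row' map_mx1. Qed.

Lemma delmx_unitary n (i : 'I_n) : delmx C i \is unitarymx.
Proof. by apply/unitarymxP; rewrite adj_delmx delmx_mulT. Qed.

Lemma hermitian_del_sub n (A : 'M[C]_n) i :
  A \is hermsymmx -> del_sub A i \is hermsymmx.
Proof.
move=> /is_hermitianmxP A_herm; apply/is_hermitianmxP; apply/matrixP => a b.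
by have /matrixP /(_ (lift i a) (lift i b)) := A_herm; rewrite !mxE.
Qed.

Lemma hermitian_spectralE n (B : 'M[C]_n) : B \is hermsymmx ->
  B = (spectralmx B)^t* *m diag_mx (spectral_diag B) *m spectralmx B.
Proof.
move=> /hermitian_normalmx /orthomx_spectralP {1}->.
by rewrite invmx_unitary ?spectral_unitarymx.
Qed.

Lemma mul_diag_adj_mxE m k (X : 'M[C]_(m, k)) (d : 'rV_k) j :
  (X *m diag_mx d *m X^t*) j j = \sum_l X j l * (X j l)^* * d 0 l.
Proof. by rewrite mul_mx_diag !mxE; apply: eq_bigr => l _; rewrite !mxE mulrAC. Qed.

Lemma mul_adj_mxE m k (X : 'M[C]_(m, k)) j :
  (X *m X^t*) j j = \sum_l X j l * (X j l)^*.
Proof. by rewrite !mxE; apply: eq_bigr => l _; rewrite !mxE. Qed.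

Lemma adj_mul_mxE m k (X : 'M[C]_(m, k)) l :
  (X^t* *m X) l l = \sum_j X j l * (X j l)^*.
Proof. by rewrite !mxE; apply: eq_bigr => j _; rewrite !mxE mulrC. Qed.

Variables (n : nat) (A : 'M[C]_n).
Hypothesis A_herm : A \is hermsymmx.

Definition mixmx (i : 'I_n) : 'M[C]_(n.-1, n) :=
  spectralmx (del_sub A i) *m delmx C i *m (spectralmx A)^t*.

Lemma mixmx_unitary i : mixmx i \is unitarymx.
Proof.
do 2?apply: mul_unitarymx;
  by rewrite ?trmxC_unitary ?spectral_unitarymx ?delmx_unitary.
Qed.

Lemma diag_del_subE i : diag_mx (spectral_diag (del_sub A i)) =
  mixmx i *m diag_mx (spectral_diag A) *m (mixmx i)^t*.
Proof.
set V := spectralmx (del_sub A i).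
have /unitarymxP VV := spectral_unitarymx (del_sub A i).
have -> : diag_mx (spectral_diag (del_sub A i)) = V *m del_sub A i *m V^t*.
  rewrite [in RHS](hermitian_spectralE (hermitian_del_sub i A_herm)) -/V.
  by rewrite !mulmxA VV mul1mx -mulmxA VV mulmx1.
rewrite /mixmx -/V !trmx_mul !map_mxM trmxCK adj_delmx del_subE.
by rewrite [in LHS](hermitian_spectralE A_herm) !mulmxA.
Qed.

Lemma sum_adj_mixmx_mul : \sum_i (mixmx i)^t* *m mixmx i = (n.-1)%:R%:M.
Proof.
have /unitarymxP UU := spectral_unitarymx A.
transitivity (spectralmx A *m (\sum_i (delmx C i)^T *m delmx C i) *m (spectralmx A)^t*).
  rewrite mulmx_sumr mulmx_suml; apply: eq_bigr => i _.
  have /unitarymxP VV : (spectralmx (del_sub A i))^t* \is unitarymx.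
    by rewrite trmxC_unitary spectral_unitarymx.
  rewrite trmxCK in VV; rewrite /mixmx !trmx_mul !map_mxM trmxCK adj_delmx.
  by rewrite -!mulmxA (mulmxA _ (spectralmx (del_sub A i))) VV mul1mx !mulmxA.
by rewrite sum_trdelmx_mul mul_mx_scalar -scalemxAl UU scalemx1.
Qed.

End Mixing.

Section RealSpectrum.
Variable R : rcfType.

Definition normc2 (x : R[i]) : R := complex.Re x ^+ 2 + complex.Im x ^+ 2.

Lemma normc2_ge0 x : 0 <= normc2 x.
Proof. by rewrite addr_ge0 ?sqr_ge0. Qed.

Lemma normc2E x : (normc2 x)%:C%C = x * x^*.
Proof. by rewrite add_Re2_Im2 sqr_normc. Qed.

Lemma hermitian_hermsymmx n (A : 'M[R[i]]_n) : is_hermitian A -> A \is hermsymmx.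
Proof.
move=> A_herm; apply/is_hermitianmxP; rewrite expr0 scale1r; apply/matrixP => a b.
by have /matrixP /(_ b a) := A_herm; rewrite !mxE.
Qed.

Lemma hermitian_spectral_diagK n (B : 'M[R[i]]_n) m : B \is hermsymmx ->
  (complex.Re (spectral_diag B 0 m))%:C%C = spectral_diag B 0 m.
Proof. by move=> /hermitian_spectral_diag_real /mxOverP /(_ 0 m) /RRe_real. Qed.

Lemma hermitian_eigenvalues_perm n (B : 'M[R[i]]_n) s :
  B \is hermsymmx -> eigenvalues_of B s ->
  perm_eq s [seq complex.Re (spectral_diag B 0 m) | m <- enum 'I_n].
Proof.
move=> B_herm Bs; apply: (perm_map_inj (@complexI R)); rewrite -map_comp.
rewrite (eq_map (fun m => hermitian_spectral_diagK m B_herm)).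
apply: (perm_eq_similar_diag (spectral_unit B)).
by rewrite -(orthomx_spectralP (hermitian_normalmx B_herm)) Bs big_map.
Qed.

Variables (n : nat) (A : 'M[R[i]]_n).
Hypothesis A_herm : A \is hermsymmx.

Lemma sum_normc2_mixmx_row i j : \sum_m normc2 (mixmx A i j m) = 1.
Proof.
apply: (@complexI R); rewrite rmorph_sum rmorph1 /=; under eq_bigr do rewrite normc2E.
by rewrite -mul_adj_mxE (unitarymxP (mixmx_unitary A i)) mxE eqxx.
Qed.

Lemma sum_normc2_mixmx_col m : \sum_i \sum_j normc2 (mixmx A i j m) = (n.-1)%:R.
Proof.
apply: (@complexI R); rewrite rmorph_sum rmorph_nat /=.
under eq_bigr do rewrite rmorph_sum /=; under eq_bigr do under eq_bigr do rewrite normc2E.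
under eq_bigr do rewrite -adj_mul_mxE.
by rewrite -summxE (sum_adj_mixmx_mul A) mxE eqxx.
Qed.

Lemma spectral_del_subE i j :
  complex.Re (spectral_diag (del_sub A i) 0 j) =
  \sum_m normc2 (mixmx A i j m) * complex.Re (spectral_diag A 0 m).
Proof.
apply: (@complexI R).
rewrite hermitian_spectral_diagK ?hermitian_del_sub // rmorph_sum /=.
have -> : spectral_diag (del_sub A i) 0 j = diag_mx (spectral_diag (del_sub A i)) j j.
  by rewrite mxE eqxx.
rewrite (diag_del_subE A_herm) mul_diag_adj_mxE; apply: eq_bigr => m _.
by rewrite rmorphM /= normc2E hermitian_spectral_diagK.
Qed.

End RealSpectrum.

Theorem lemma4p3 (R : rcfType) (n : nat) (A : 'M[R[i]]_n)
  (lam : seq R) (mu : 'I_n -> seq R) :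
  (2 <= n)%N ->
  is_hermitian A ->
  eigenvalues_of A lam ->
  (forall i : 'I_n, eigenvalues_of (del_sub A i) (mu i)) ->
  majorizes (flatten (nseq n.-1 lam)) (flatten [seq mu i | i <- enum 'I_n]).
Proof.
move=> _ /hermitian_hermsymmx A_herm lamE muE.
apply: (averaging_majorizes (c := n.-1)
  (x := fun m => complex.Re (spectral_diag A 0 m))
  (y := fun i j => complex.Re (spectral_diag (del_sub A i) 0 j))
  (w := fun i j m => normc2 (mixmx A i j m))).
- by rewrite card_ord mulnC.
- exact: hermitian_eigenvalues_perm.
- by move=> i; apply: hermitian_eigenvalues_perm (hermitian_del_sub i A_herm) (muE i).
- by move=> *; apply: normc2_ge0.
- exact: sum_normc2_mixmx_row.
- exact: sum_normc2_mixmx_col.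
- exact: spectral_del_subE.
Qed.
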